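(* Let $X$ be a compact metric space and $f:X\dashrightarrow X$ a continuous open-dense defined map which is good with respect to iterates. Let $\mu$ be an $f$-invariant Borel probability measure on $X$ with $\mu(I_\infty(f))=0$. Then there exists a unique Borel measure $\hat\mu$ on $\Gamma_{f,\infty}$ such that $(\pi_1)_*(\hat\mu)\le\mu$, $\hat\mu(\Gamma_{f,\infty})=1$ and $(\sigma_f)_*(\hat\mu)=\hat\mu$. Moreover $h_\mu(f)=h_{\hat\mu}(\sigma_f)$.
   Context: A continuous open-dense defined map $f:X\dashrightarrow X$ is a continuous map $f:\mathrm{OpenDom}(f)\to X$ with $\mathrm{OpenDom}(f)$ open dense; $I(f)=X\setminus\mathrm{OpenDom}(f)$. Let $\Omega_{f,\infty}=\{x\in\mathrm{OpenDom}(f):f^n(x)\notin I(f)\ \forall n\in\mathbb{N}\}$ and $I_\infty(f)=X\setminus\Omega_{f,\infty}$; $f$ is good with respect to iterates if $\Omega_{f,\infty}$ is dense and $I_\infty(f)$ is nowhere dense. $\Gamma_{f,\infty}$ is the closure in $X^{\mathbb{N}}$ (product topology, a compact metrizable space) of $\{(x,f(x),f^2(x),\ldots):x\in\Omega_{f,\infty}\}$; $\sigma_f:\Gamma_{f,\infty}\to\Gamma_{f,\infty}$ is the shift $(x_1,x_2,\ldots)\mapsto(x_2,x_3,\ldots)$ and $\pi_1(x_1,x_2,\ldots)=x_1$. $f$-invariance of $\mu$ means $f_*\mu=\mu$, where for a measure with no mass on $I(f)$, $f_*\mu(\varphi)=\int_{X\setminus I(f)}\varphi\circ f\,d\mu$.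 $h_\mu(f)$ is the Kolmogorov–Sinai entropy of the measure-preserving map $f:\Omega_{f,\infty}\to\Omega_{f,\infty}$ with respect to $\mu$, and $h_{\hat\mu}(\sigma_f)$ is the Kolmogorov–Sinai entropy of $\sigma_f$ with respect to $\hat\mu$. For measures, $\le$ means inequality of integrals against all continuous functions (equivalently on all Borel sets). *)

From HB Require Import structures.
From mathcomp Require Import all_boot all_order all_algebra.
From mathcomp Require Import all_classical all_reals all_analysis.

Set Implicit Arguments.
Unset Strict Implicit.
Unset Printing Implicit Defensive.

Import Order.TTheory GRing.Theory Num.Theory.
Import numFieldNormedType.Exports.
Local Open Scope classical_set_scope.
Local Open Scope ring_scope.

Notation Borel T := (g_sigma_algebraType (@open T)).

(* U is OpenDom(f); f : X -> X is total, but only its values on U matter. *)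
Definition open_dense_defined_map (X : topologicalType) (U : set X) (f : X -> X)
  : Prop :=
  open U /\ closure U = setT /\ {within U, continuous f}.

Definition Omega_inf (X : Type) (U : set X) (f : X -> X) : set X :=
  [set x | forall n : nat, U (iter n f x)].

Definition I_inf (X : Type) (U : set X) (f : X -> X) : set X :=
  ~` Omega_inf U f.

Definition good_wrt_iterates (X : topologicalType) (U : set X) (f : X -> X)
  : Prop :=
  closure (Omega_inf U f) = setT /\ interior (closure (I_inf U f)) = set0.

Definition orbit_seq (X : Type) (f : X -> X) (x : X) : nat -> X :=
  fun n => iter n f x.

Definition Gamma_inf (X : topologicalType) (U : set X) (f : X -> X)
  : set {ptws nat -> X} :=
  closure [set (orbit_seq f x : {ptws nat -> X}) | x in Omega_inf U f].

Definition shift_seq (X : Type) (s : nat -> X) : nat -> X := fun n => s n.+1.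

Definition proj1_seq (X : Type) (s : nat -> X) : X := s 0%N.

(* f-invariance of mu (mu has no mass on I(f) = ~` U):
   f_* mu (B) = mu (U /\ f^-1 B) = mu B for every Borel B. *)
Definition f_invariant (X : ptopologicalType) (R : realType)
  (U : set X) (f : X -> X) (mu : set (Borel X) -> \bar R) : Prop :=
  forall B : set (Borel X), measurable B -> mu (U `&` f @^-1` B) = mu B.

Definition eta_ent (R : realType) (x : R) : R := - (x * ln x).

Definition is_fin_partition (S : Type) (M : set (set S)) (D : set S) (k : nat)
  (P : 'I_k -> set S) : Prop :=
  [/\ forall j, M (P j),
      forall j, P j `<=` D,
      forall i j, i != j -> P i `&` P j = set0
    & \bigcup_(j in setT) P j = D].

(* H_m( P v T^-1 P v ... v T^-(n-1) P ): the atoms of the join are indexed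
   by words w : 'I_n -> 'I_k. *)
Definition join_entropy (R : realType) (S : Type) (m : set S -> \bar R)
  (D : set S) (T : S -> S) (k : nat) (P : 'I_k -> set S) (n : nat) : R :=
  \sum_(w : {ffun 'I_n -> 'I_k})
     eta_ent (fine (m [set x | D x /\ forall i : 'I_n, P (w i) (iter i T x)])).

Definition KS_entropy_partition (R : realType) (S : Type) (m : set S -> \bar R)
  (D : set S) (T : S -> S) (k : nat) (P : 'I_k -> set S) : R :=
  let u : R^nat := fun n => join_entropy m D T P n / n%:R in limn u.

Definition KS_entropy (R : realType) (S : Type) (M : set (set S))
  (m : set S -> \bar R) (D : set S) (T : S -> S) : \bar R :=
  ereal_sup [set e | exists (k : nat) (P : 'I_k -> set S),
                       is_fin_partition M D P /\
                       e = (KS_entropy_partition m D T P)%:E].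

From HB Require Import structures.
From mathcomp Require Import all_boot all_order all_algebra.
From mathcomp Require Import all_classical all_reals all_analysis.

Import Order.TTheory GRing.Theory Num.Theory.
Import numFieldNormedType.Exports.
Local Open Scope classical_set_scope.
Local Open Scope ring_scope.

Set Implicit Arguments.
Unset Strict Implicit.
Unset Printing Implicit Defensive.

(* The measure is the push-forward of mu, restricted to Omega_{f,oo}, along
   the orbit map x |-> (x, f x, f^2 x, ...): it lives on Gamma_{f,oo}, and the
   f-invariance of mu becomes shift invariance. Conversely, a shift-invariant
   nu on Gamma_{f,oo} has first marginal dominated by, hence equal to, mu, so
   it gives no mass to the sequences that leave Omega_{f,oo} at some time. As f
   is continuous on the open set U and X is Hausdorff, a point of the closure
   Gamma_{f,oo} all of whose coordinates lie in U is an orbit, so nu is the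
   push-forward again. The orbit map conjugates f to the shift and identifies
   finite partitions of Omega_{f,oo} with those of Gamma_{f,oo} up to null
   sets, whence the entropies agree. *)

Section orbits.
Variables (X : Type) (U : set X) (f : X -> X).

Lemma iter_shift_seq (s : nat -> X) i n :
  iter i (@shift_seq X) s n = s (n + i)%N.
Proof.
elim: i n => [|i IH] n /=; first by rewrite addn0.
by rewrite /shift_seq IH addSnnS.
Qed.

Lemma orbit_seq_iter x i :
  orbit_seq f (iter i f x) = iter i (@shift_seq X) (orbit_seq f x).
Proof. by apply: funext => n; rewrite iter_shift_seq /orbit_seq iterD. Qed.

Lemma Omega_inf_iter x i : Omega_inf U f x -> Omega_inf U f (iter i f x).
Proof. by move=> Ox n; rewrite -iterD; apply: Ox. Qed.

Lemma Omega_inf_sub : Omega_inf U f `<=` U.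
Proof. by move=> x /(_ 0%N). Qed.

Lemma Omega_infE : Omega_inf U f = U `&` f @^-1` Omega_inf U f.
Proof.
apply/seteqP; split=> [x Ox|x [Ux Ofx]].
  by split; [exact: Omega_inf_sub | exact: (Omega_inf_iter 1 Ox)].
by case=> [|n] //; rewrite iterSr; apply: Ofx.
Qed.

End orbits.

(* As for [mrestr], the measurability proofs are arguments so that the
   measure structure of [pushforward_on mD mg] can be inferred. *)
Section pushforward_on.
Context d d' (T1 : measurableType d) (T2 : measurableType d') (R : realType).
Variables (mu : {measure set T1 -> \bar R}) (D : set T1) (g : T1 -> T2).

Definition pushforward_on (mD : measurable D) (mg : measurable_fun D g) :
    set T2 -> \bar R :=
  fun A => mu (D `&` g @^-1` A).

Hypotheses (mD : measurable D) (mg : measurable_fun D g).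

Let pushforward_on0 : pushforward_on mD mg set0 = 0%E.
Proof. by rewrite /pushforward_on preimage_set0 setI0 measure0. Qed.

Let pushforward_on_ge0 A : (0 <= pushforward_on mD mg A)%E.
Proof. exact: measure_ge0. Qed.

Let pushforward_on_sigma_additive : semi_sigma_additive (pushforward_on mD mg).
Proof.
move=> F mF tF mUF; rewrite /pushforward_on preimage_bigcup setI_bigcupr.
apply: measure_semi_sigma_additive.
- by move=> n; apply: mg.
- apply/trivIsetP => /= i j _ _ ij.
  rewrite setIACA setIid -preimage_setI.
  by move/trivIsetP : tF => /(_ _ _ _ _ ij) ->//; rewrite preimage_set0 setI0.
- by rewrite -setI_bigcupr -preimage_bigcup; apply: mg.
Qed.

HB.instance Definition _ := isMeasure.Build _ _ _ (pushforward_on mD mg)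
  pushforward_on0 pushforward_on_ge0 pushforward_on_sigma_additive.

End pushforward_on.

Section measure_facts.
Context d (T : measurableType d) (R : realType).

Lemma eq_measure_off_null (nu : {measure set T -> \bar R}) (N A B : set T) :
  measurable N -> measurable A -> measurable B -> nu N = 0%E ->
  A `\` N = B `\` N -> nu A = nu B.
Proof.
move=> mN mA mB nuN AB.
suff nuDN C : measurable C -> nu C = nu (C `\` N) by rewrite nuDN // AB -nuDN.
move=> mC; rewrite {1}(_ : C = (C `\` N) `|` (C `&` N)); last first.
  by rewrite setDE -setIUr setUCl setIT.
rewrite measureU0 //; [exact: measurableD | exact: measurableI |].
by apply: (@subset_measure0 _ _ _ nu (C `&` N) N) => //; exact: measurableI.
Qed.

Lemma le_probability_preimage_eq d' (T' : measurableType d')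
    (P : probability T R) (nu : {measure set T' -> \bar R}) (g : T' -> T) :
  measurable_fun setT g -> nu setT = 1%E ->
  (forall B, measurable B -> (nu (g @^-1` B) <= P B)%E) ->
  forall B, measurable B -> nu (g @^-1` B) = P B.
Proof.
move=> mg nuT nuP B mB; apply/eqP; rewrite eq_le nuP //=.
have mgB C : measurable C -> measurable (g @^-1` C).
  by move=> mC; rewrite -[_ @^-1` _]setTI; apply: mg.
have nu1 : (nu (g @^-1` B) + nu (g @^-1` (~` B)) = 1)%E.
  rewrite -measureU; [|exact: mgB|exact/mgB/measurableC|].
    by rewrite -preimage_setU setUCr preimage_setT.
  by rewrite -preimage_setI setICr preimage_set0.
have P1 : (P B + P (~` B) = 1)%E.
  rewrite -measureU; [|by []|exact: measurableC|by rewrite setICr].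
  by rewrite setUCr; exact: probability_setT.
have PCfin : P (~` B) \is a fin_num.
  by apply: fin_num_measure; exact: measurableC.
by rewrite -(leeD2rE _ _ PCfin) P1 -nu1 leeD2l // nuP //; exact: measurableC.
Qed.

Lemma measure_setC0 (nu : {measure set T -> \bar R}) (A : set T) :
  measurable A -> nu (~` A) = 0%E -> nu A = nu setT.
Proof.
by move=> mA nuAC; rewrite -(setUCr A) measureU0 //; exact: measurableC.
Qed.

End measure_facts.

(* Makes the sequence space a pointed topological space, as [Borel] needs. *)
HB.instance Definition _ (I : Type) (X : ptopologicalType) :=
  Pointed.on {ptws I -> X}.

Section borel.
Variables (T T' : ptopologicalType).

Lemma open_Borel_measurable (V : set T) : open V -> @measurable _ (Borel T) V.
Proof. exact: sub_sigma_algebra. Qed.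

Lemma closed_Borel_measurable (V : set T) :
  closed V -> @measurable _ (Borel T) V.
Proof.
move=> cV; rewrite -[V]setCK; apply: measurableC.
by apply: open_Borel_measurable; exact: closed_openC.
Qed.

Lemma within_continuous_Borel_measurable (D : set T) (g : T -> T') :
  @measurable _ (Borel T) D -> {within D, continuous g} ->
  measurable_fun (T := Borel T) (U := Borel T') D g.
Proof.
move=> mD cg.
apply: (@measurability _ _ (Borel T) (Borel T') D g (@open T')) => //.
move=> _ [V oV <-].
have /open_subspaceP [W oW WE] := proj1 (continuousP _) cg V oV.
rewrite setIC -WE; apply: measurableI => //; exact: open_Borel_measurable.
Qed.

End borel.

Lemma eval_Borel_measurable (X : ptopologicalType) n :
  measurable_fun (T := Borel {ptws nat -> X}) (U := Borel X) setT
    (fun s : {ptws nat -> X} => s n).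
Proof.
apply: within_continuous_Borel_measurable => //.
apply: continuous_subspaceT; exact: (@proj_continuous nat (fun=> X) n).
Qed.

Lemma Gamma_inf_measurable (X : ptopologicalType) (U : set X) (f : X -> X) :
  @measurable _ (Borel {ptws nat -> X}) (Gamma_inf U f).
Proof. by apply: closed_Borel_measurable; exact: closed_closure. Qed.

Lemma shift_invariant_coord_preimage (R : realType) (X : ptopologicalType)
    (nu : {measure set (Borel {ptws nat -> X}) -> \bar R}) (B : set X) n :
  (forall A : set (Borel {ptws nat -> X}), measurable A ->
     nu (@shift_seq X @^-1` A) = nu A) ->
  @measurable _ (Borel X) B ->
  nu [set s : {ptws nat -> X} | B (s n)] = nu (@proj1_seq X @^-1` B).
Proof.
move=> nuS mB; elim: n => [|n IH] //; rewrite -IH -[in RHS]nuS //.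
by rewrite -[X in measurable X]setTI; apply: eval_Borel_measurable.
Qed.

Section iterates.
Variables (X : puniformType) (U : set X) (f : X -> X).
Hypotheses (oU : open U) (cf : {within U, continuous f}).

Let cf_in : {in U, continuous f}.
Proof. by rewrite -continuous_open_subspace. Qed.

Fixpoint Omega_upto n : set X :=
  if n is m.+1 then U `&` f @^-1` Omega_upto m else U.

Lemma Omega_uptoP n x :
  Omega_upto n x <-> forall m, (m <= n)%N -> U (iter m f x).
Proof.
elim: n x => [|n IH] x /=.
  by split=> [Ux [|m]//|H]; exact: (H 0%N).
split=> [[Ux /IH H] [|m] // mn|H]; first by rewrite iterSr; apply: H.
by split; [exact: (H 0%N) | apply/IH => m mn; rewrite -iterSr; apply: H].
Qed.

Lemma Omega_inf_bigcap : Omega_inf U f = \bigcap_n Omega_upto n.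
Proof.
apply/seteqP; split=> x; first by move=> Ox n _; apply/Omega_uptoP => m _.
by move=> H m; have /Omega_uptoP := H m Logic.I; apply.
Qed.

Lemma open_Omega_upto n : open (Omega_upto n).
Proof.
elim: n => [|n IH] //=; exact: (proj1 (continuous_inP _ oU) cf_in).
Qed.

Lemma Omega_inf_measurable : @measurable _ (Borel X) (Omega_inf U f).
Proof.
rewrite Omega_inf_bigcap; apply: bigcapT_measurable => n.
apply: open_Borel_measurable; exact: open_Omega_upto.
Qed.

Lemma orbit_seq_continuous :
  {within Omega_inf U f, continuous (orbit_seq f : X -> {ptws nat -> X})}.
Proof.
apply/subspace_continuousP => x Ox; apply/pointwise_cvgP => n.
elim: n => [|n IH]; first exact: cvg_within.
exact: cvg_comp IH (cf_in (mem_set (Omega_inf_sub (Omega_inf_iter n Ox)))).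
Qed.

Lemma orbit_seq_measurable :
  measurable_fun (T := Borel X) (U := Borel {ptws nat -> X})
    (Omega_inf U f) (orbit_seq f).
Proof.
exact: within_continuous_Borel_measurable
  Omega_inf_measurable orbit_seq_continuous.
Qed.

End iterates.

Notation orbit_measure mu oU cf :=
  (pushforward_on mu (Omega_inf_measurable oU cf) (orbit_seq_measurable oU cf)).

Section closure_of_orbits.
Variables (X : topologicalType) (U : set X) (f : X -> X).

Lemma orbit_seq_Gamma_inf x : Omega_inf U f x -> Gamma_inf U f (orbit_seq f x).
Proof. by move=> Ox; apply: subset_closure; exists x. Qed.

Hypotheses (hX : hausdorff_space X) (oU : open U).
Hypothesis cf : {within U, continuous f}.

Lemma Gamma_inf_succ (s : {ptws nat -> X}) n :
  Gamma_inf U f s -> U (s n) -> s n.+1 = f (s n).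
Proof.
move=> Gs Usn; apply: hX => A B NA NB.
have NUB : nbhs (s n) (U `&` f @^-1` B).
  apply: filterI; first exact: open_nbhs_nbhs.
  move: cf; rewrite continuous_open_subspace // => /(_ (s n) (mem_set Usn)).
  by apply.
have /Gs [_ [[x Ox <-] [[_ Bx] Ax]]] :
    nbhs s ([set t : {ptws nat -> X} | (U `&` f @^-1` B) (t n)] `&`
            [set t : {ptws nat -> X} | A (t n.+1)]).
  by apply: filterI; apply: (@proj_continuous nat (fun=> X)).
by exists (iter n.+1 f x); split.
Qed.

Lemma Gamma_inf_orbit (s : {ptws nat -> X}) :
  Gamma_inf U f s -> (forall n, U (s n)) -> s = orbit_seq f (s 0%N).
Proof.
move=> Gs Us; apply: funext; elim=> [|n IH] //.
by rewrite (Gamma_inf_succ Gs (Us n)) IH.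
Qed.

End closure_of_orbits.

Section orbit_measure.
Variables (R : realType) (X : puniformType) (U : set X) (f : X -> X).
Hypotheses (oU : open U) (cf : {within U, continuous f}).
Variable mu : {measure set (Borel X) -> \bar R}.

Local Notation Omega := (Omega_inf U f).
Local Notation Gamma := (Gamma_inf U f).
Local Notation mO := (Omega_inf_measurable oU cf).
Local Notation muh := (orbit_measure mu oU cf).

Lemma orbit_measure_Gamma_infC : muh (~` Gamma) = 0%E.
Proof.
rewrite /pushforward_on (_ : _ `&` _ = set0) ?measure0 //.
by apply/seteqP; split => x // [Ox]; apply; apply: orbit_seq_Gamma_inf.
Qed.

Lemma orbit_measure_Gamma_inf : muh Gamma = mu Omega.
Proof.
rewrite /pushforward_on; congr (mu _); apply/seteqP.
by split => [x []|x Ox] //; split => //; exact: orbit_seq_Gamma_inf.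
Qed.

Lemma orbit_measure_proj1_le (B : set (Borel X)) :
  measurable B -> (muh (@proj1_seq X @^-1` B) <= mu B)%E.
Proof.
move=> mB; rewrite /pushforward_on le_measure ?inE //.
exact: (measurableI _ _ mO mB).
Qed.

Lemma orbit_measure_shift : f_invariant U f mu ->
  forall A : set (Borel {ptws nat -> X}), measurable A ->
  muh (@shift_seq X @^-1` A) = muh A.
Proof.
move=> finv A mA; rewrite /pushforward_on -[RHS]finv; last first.
  exact: (orbit_seq_measurable oU cf mO mA).
congr (mu _); apply/seteqP; split => x.
  move=> [Ox HA]; rewrite Omega_infE in Ox; case: Ox => Ux Ofx.
  by split => //; split => //; rewrite /preimage /= (orbit_seq_iter f x 1).
move=> [Ux [Ofx HA]]; split; first by rewrite Omega_infE.
by move: HA; rewrite /preimage /= (orbit_seq_iter f x 1).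
Qed.

Lemma orbit_measure_unique
    (nu : {measure set (Borel {ptws nat -> X}) -> \bar R}) :
  hausdorff_space X -> mu (I_inf U f) = 0%E -> nu (~` Gamma) = 0%E ->
  (forall B : set (Borel X), measurable B ->
     nu (@proj1_seq X @^-1` B) = mu B) ->
  (forall A : set (Borel {ptws nat -> X}), measurable A ->
     nu (@shift_seq X @^-1` A) = nu A) ->
  forall A : set (Borel {ptws nat -> X}), measurable A -> nu A = muh A.
Proof.
move=> hX muI nuG nuP nuS A mA.
pose N : set (Borel {ptws nat -> X}) :=
  ~` Gamma `|` \bigcup_n [set s : {ptws nat -> X} | I_inf U f (s n)].
have mI n : @measurable _ (Borel {ptws nat -> X})
    [set s : {ptws nat -> X} | I_inf U f (s n)].
  rewrite -[X in measurable X]setTI; apply: eval_Borel_measurable => //.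
  exact: measurableC mO.
have mGC : @measurable _ (Borel {ptws nat -> X}) (~` Gamma).
  by apply: measurableC; exact: Gamma_inf_measurable.
have mN : measurable N by apply: measurableU => //; exact: bigcupT_measurable.
have nuN : nu N = 0%E.
  rewrite measureU0 //; first exact: bigcupT_measurable.
  apply/measure_negligible; [exact: bigcupT_measurable|].
  apply: negligible_bigcup => n; apply/negligibleP => //.
  have mI0 : @measurable _ (Borel X) (I_inf U f) by exact: measurableC mO.
  by apply: eq_trans (shift_invariant_coord_preimage n nuS mI0) _; rewrite nuP.
have orbitN (s : {ptws nat -> X}) :
    ~ N s -> Omega (s 0%N) /\ s = orbit_seq f (s 0%N).
  move=> Ns; have Gs : Gamma s by apply: contrapT => ?; apply: Ns; left.
  have Os n : Omega (s n) by apply: contrapT => ?; apply: Ns; right; exists n.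
  split; first exact: Os.
  exact (Gamma_inf_orbit hX oU cf Gs (fun n => Omega_inf_sub (Os n))).
have mC := orbit_seq_measurable oU cf mO mA.
rewrite /pushforward_on -nuP //; apply: (eq_measure_off_null mN) => //.
  by rewrite -[X in measurable X]setTI; apply: eval_Borel_measurable.
apply/seteqP; split => s [As Ns]; have [Os0 s_orbit] := orbitN s Ns.
  by split => //; split => //; rewrite /preimage /= -s_orbit.
by split => //; rewrite s_orbit; case: As.
Qed.

Definition orbit_pullback k (Q : 'I_k -> set {ptws nat -> X}) (j : 'I_k) :
    set X :=
  Omega `&` orbit_seq f @^-1` Q j.

Lemma join_entropy_orbit_measure k (Q : 'I_k -> set {ptws nat -> X}) n :
  join_entropy muh Gamma (@shift_seq X) Q n =
  join_entropy mu Omega f (orbit_pullback Q) n.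
Proof.
apply: eq_bigr => w _; congr (eta_ent (fine (mu _))).
apply/seteqP; split => x /=.
  move=> [Ox [_ Qw]]; split => // i; split; first exact: Omega_inf_iter.
  by rewrite /preimage /= orbit_seq_iter; apply: Qw.
move=> [Ox Qw]; split => //; split; first exact: orbit_seq_Gamma_inf.
by move=> i; rewrite -orbit_seq_iter; case: (Qw i).
Qed.

Lemma KS_entropy_partition_orbit_measure k (Q : 'I_k -> set {ptws nat -> X}) :
  KS_entropy_partition muh Gamma (@shift_seq X) Q =
  KS_entropy_partition mu Omega f (orbit_pullback Q).
Proof.
rewrite /KS_entropy_partition; congr (limn _); apply: funext => n.
by rewrite join_entropy_orbit_measure.
Qed.

Lemma is_fin_partition_orbit_pullback k (Q : 'I_k -> set {ptws nat -> X}) :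
  is_fin_partition (@measurable _ (Borel {ptws nat -> X})) Gamma Q ->
  is_fin_partition (@measurable _ (Borel X)) Omega (orbit_pullback Q).
Proof.
case=> mQ _ dQ cQ; split.
- by move=> j; exact: (orbit_seq_measurable oU cf mO (mQ j)).
- by move=> j x [].
- move=> i j ij; rewrite /orbit_pullback setIACA setIid -preimage_setI.
  by rewrite (dQ i j ij) preimage_set0 setI0.
- apply/seteqP; split=> [x [j _ []] //|x Ox].
  by have := orbit_seq_Gamma_inf Ox; rewrite -cQ => -[j _ Qj]; exists j.
Qed.

Lemma is_fin_partition_orbit_pushforward k (P : 'I_k -> set X) :
  is_fin_partition (@measurable _ (Borel X)) Omega P ->
  exists Q : 'I_k -> set {ptws nat -> X},
    is_fin_partition (@measurable _ (Borel {ptws nat -> X})) Gamma Q /\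
    orbit_pullback Q = P.
Proof.
case=> mP sP dP cP.
(* sequences starting outside Omega_{f,oo} are put into the block of index 0 *)
pose P' (j : 'I_k) := P j `|` (if val j == 0%N then ~` Omega else set0).
have P'E j x : Omega x -> P' j x <-> P j x.
  by move=> Ox; rewrite /P'; case: ifP => _; split=> [[]|] //; left.
exists (fun j => Gamma `&` [set s : {ptws nat -> X} | P' j (s 0%N)]).
split; last first.
  apply: funext => j; apply/seteqP; split=> [x [Ox [_ /(P'E j x Ox)]] //|x Px].
  have Ox := sP j x Px.
  by split=> //; split; [exact: orbit_seq_Gamma_inf | exact/(P'E j x Ox)].
split.
- move=> j; apply: measurableI; first exact: Gamma_inf_measurable.
  rewrite -[X in measurable X]setTI; apply: eval_Borel_measurable => //.
  apply: measurableU => //; case: ifP => _ //; exact: measurableC mO.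
- by move=> j s [].
- move=> i j ij; apply/seteqP; split=> s // [[_ Pi] [_ Pj]].
  have [Os0|NOs0] := pselect (Omega (s 0%N)).
    suff : (P i `&` P j) (s 0%N) by rewrite dP.
    by split; [exact/(P'E i _ Os0) | exact/(P'E j _ Os0)].
  have P'0 l : P' l (s 0%N) -> val l = 0%N.
    by rewrite /P'; case: eqP => // _ [/sP/NOs0|].
  by move/eqP: ij; apply; apply: val_inj; rewrite /= (P'0 i Pi) (P'0 j Pj).
- apply/seteqP; split=> [s [j _ []] //|s Gs].
  have [Os0|NOs0] := pselect (Omega (s 0%N)).
    move: (Os0); rewrite -cP => -[j _ Pj].
    by exists j => //; split=> //; exact/(P'E j _ Os0).
  (* Gamma_{f,oo} is nonempty, so Omega_{f,oo} is, so there is a block 0 *)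
  have [x Ox] : Omega !=set0.
    apply/set0P/negP => /eqP O0; move: Gs.
    by rewrite /Gamma_inf O0 image_set0 closure0.
  move: (Ox); rewrite -cP => -[j0 _ _].
  have k_gt0 : (0 < k)%N by exact: leq_ltn_trans (leq0n _) (ltn_ord j0).
  by exists (Ordinal k_gt0) => //; split => //; right; rewrite eqxx.
Qed.

Lemma KS_entropy_orbit_measure :
  KS_entropy (@measurable _ (Borel X)) mu Omega f =
  KS_entropy (@measurable _ (Borel {ptws nat -> X})) muh Gamma (@shift_seq X).
Proof.
rewrite /KS_entropy; congr ereal_sup; apply/seteqP; split => e [k [P [hP ->]]].
  have [Q [hQ <-]] := is_fin_partition_orbit_pushforward hP.
  by exists k, Q; rewrite KS_entropy_partition_orbit_measure.
exists k, (orbit_pullback P).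
split; first exact: is_fin_partition_orbit_pullback.
by rewrite KS_entropy_partition_orbit_measure.
Qed.

End orbit_measure.

Theorem proposition1p6 (R : realType) (X : pseudoPMetricType R)
  (U : set X) (f : X -> X)
  (mu : probability (Borel X) R) :
  hausdorff_space X -> compact [set: X] ->
  open_dense_defined_map U f ->
  good_wrt_iterates U f ->
  f_invariant U f mu ->
  mu (I_inf U f) = 0%E ->
  exists muh : {measure set (Borel {ptws nat -> X}) -> \bar R},
    [/\ muh (~` Gamma_inf U f) = 0%E
         /\ (forall B : set (Borel X), measurable B ->
           (muh (@proj1_seq X @^-1` B) <= mu B)%E),
        muh (Gamma_inf U f) = 1%E,
        (forall A : set (Borel {ptws nat -> X}), measurable A ->
           muh (@shift_seq X @^-1` A) = muh A),
        (forall nu : {measure set (Borel {ptws nat -> X}) -> \bar R},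
           nu (~` Gamma_inf U f) = 0%E ->
           (forall B : set (Borel X), measurable B ->
              (nu (@proj1_seq X @^-1` B) <= mu B)%E) ->
           nu (Gamma_inf U f) = 1%E ->
           (forall A : set (Borel {ptws nat -> X}), measurable A ->
              nu (@shift_seq X @^-1` A) = nu A) ->
           forall A : set (Borel {ptws nat -> X}), measurable A -> nu A = muh A)
      & KS_entropy (@measurable _ (Borel X)) mu (Omega_inf U f) f
        = KS_entropy (@measurable _ (Borel {ptws nat -> X})) muh
            (Gamma_inf U f) (@shift_seq X)].
Proof.
move=> hX _ [oU [_ cf]] _ finv muI.
exists (orbit_measure mu oU cf); split.
- by split; [exact: orbit_measure_Gamma_infC | exact: orbit_measure_proj1_le].
- apply: eq_trans (orbit_measure_Gamma_inf oU cf mu) _.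
  apply: eq_trans (measure_setC0 (Omega_inf_measurable oU cf) muI) _.
  exact: probability_setT.
- exact: orbit_measure_shift.
- move=> nu nuGC nuP nuG nuS; apply: orbit_measure_unique => //.
  apply: le_probability_preimage_eq => //; first exact: eval_Borel_measurable.
  exact: eq_trans (esym (measure_setC0 (Gamma_inf_measurable U f) nuGC)) nuG.
- exact: KS_entropy_orbit_measure.
Qed.
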